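(* Let $q$ be a prime power, $k,t$ positive integers, and let $\mathcal{P}=\{P_1,\ldots,P_E\}$ be a partition of $\mathbb{F}_q^k$. For every list of distinct vectors $u_1,\ldots,u_m\in\mathbb{F}_q^k$, $$N\big(\mathcal{D}_{\mathcal{P}}(t;u_1,\ldots,u_m)\big)\;\le\; r_{\mathcal{P}}(k,t)\;\le\; N\big(\mathcal{D}_{\mathcal{P}}(t;P_1,\ldots,P_E)\big).$$ Moreover, if $E\ge 2$, then $r_{\mathcal{P}}(k,t)\ge 2t$.
   Context: $d(\cdot,\cdot)$ denotes Hamming distance. A $(\mathcal{P},t)$-encoding with redundancy $r$ is a systematic map $\mathcal{C}:\mathbb{F}_q^k\to\mathbb{F}_q^{k+r}$, $\mathcal{C}(u)=(u,p(u))$ with $p(u)\in\mathbb{F}_q^r$, such that $d(\mathcal{C}(u),\mathcal{C}(v))\ge 2t+1$ whenever $u,v$ lie in different blocks of $\mathcal{P}$. The optimal redundancy $r_{\mathcal{P}}(k,t)$ is the minimum $r$ for which a $(\mathcal{P},t)$-encoding with redundancy $r$ exists. For distinct $u_1,\ldots,u_M\in\mathbb{F}_q^k$, the partition distance requirement matrix $\mathcal{D}_{\mathcal{P}}(t;u_1,\ldots,u_M)$ is the $M\times M$ matrix with $(i,j)$ entry $\max(2t+1-d(u_i,u_j),0)$ if $u_i,u_j$ lie in different blocks of $\mathcal{P}$ and $0$ otherwise. For blocks, $d(P_i,P_j)=\min_{u\in P_i,v\in P_j}d(u,v)$ for $i\ne j$; the partition distance matrix $\mathcal{D}_{\mathcal{P}}(t;P_1,\ldots,P_E)$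 is the $E\times E$ matrix with $(i,j)$ entry $\max(2t+1-d(P_i,P_j),0)$ for $i\neq j$ and $0$ on the diagonal. For a matrix $D\in\mathbb{N}^{M\times M}$, $N(D)$ is the smallest integer $r\ge 0$ such that there exist $z_1,\ldots,z_M\in\mathbb{F}_q^r$ (not necessarily distinct) with $d(z_i,z_j)\ge D_{i,j}$ for all $i\ne j$ (such a list is called a $D$-code). *)

From HB Require Import structures.
From mathcomp Require Import all_boot all_order all_algebra all_field.
From Stdlib Require Import ClassicalEpsilon.
Set Implicit Arguments. Unset Strict Implicit. Unset Printing Implicit Defensive.

(* Least natural number satisfying a (boolean) predicate; 0 if none exists
   (for all predicates used here a witness exists). *)
Definition min_nat (Pr : pred nat) : nat :=
  match excluded_middle_informative (exists n, Pr n) with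
  | left h => ex_minn h
  | right _ => 0
  end.

Definition hamming (F : finType) (n : nat) (x y : 'rV[F]_n) : nat :=
  #|[set i : 'I_n | x ord0 i != y ord0 i]|.

Definition is_Dcode_len (F : finType) (M : nat) (D : 'M[nat]_M) (r : nat) : bool :=
  [exists z : {ffun 'I_M -> 'rV[F]_r},
     [forall i : 'I_M, forall j : 'I_M,
        (i != j) ==> (D i j <= hamming (z i) (z j))]].

Definition N_req (F : finType) (M : nat) (D : 'M[nat]_M) : nat :=
  min_nat (is_Dcode_len F D).

Definition has_encoding (F : finType) (k : nat) (P : {set {set 'rV[F]_k}})
    (t r : nat) : bool :=
  [exists p : {ffun 'rV[F]_k -> 'rV[F]_r},
     [forall u : 'rV[F]_k, forall v : 'rV[F]_k,
        (pblock P u != pblock P v) ==>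
        (2 * t + 1 <= hamming (row_mx u (p u)) (row_mx v (p v)))]].

Definition r_opt (F : finType) (k : nat) (P : {set {set 'rV[F]_k}}) (t : nat) : nat :=
  min_nat (has_encoding P t).

(* Partition distance requirement matrix D_P(t; u_1..u_M);
   nat subtraction truncates, i.e. gives max(. , 0). *)
Definition DP_vecs (F : finType) (k : nat) (P : {set {set 'rV[F]_k}}) (t : nat)
    (M : nat) (u : 'I_M -> 'rV[F]_k) : 'M[nat]_M :=
  \matrix_(i, j) (if pblock P (u i) != pblock P (u j)
                  then (2 * t + 1) - hamming (u i) (u j) else 0).

(* Distance between two sets of vectors: minimum over pairs (the default
   value k is never smaller than any Hamming distance, so for nonempty sets
   this is exactly the minimum). *)
Definition set_dist (F : finType) (k : nat) (A B : {set 'rV[F]_k}) : nat :=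
  \big[minn/k]_(u in A) \big[minn/k]_(v in B) hamming u v.

Definition DP_blocks (F : finType) (k : nat) (P : {set {set 'rV[F]_k}}) (t : nat)
    : 'M[nat]_#|P| :=
  \matrix_(i, j) (if i != j
                  then (2 * t + 1) - set_dist (enum_val i) (enum_val j) else 0).

(* The upper bound: index the blocks, take a D-code c_1, ..., c_E for the
   block distance matrix and encode u by c_i when u lies in the block P_i;
   two inputs from different blocks are at distance at least d(P_i, P_j),
   which the redundancy part tops up to 2t+1.  The lower bound: restricting
   any encoding to u_1, ..., u_m yields a D-code for the vector requirement
   matrix.  Finally, if r < 2t then inputs at Hamming distance at most 1
   cannot be separated, so they share a block; since any two vectors are
   joined by a chain of such steps, there is only one block. *)
From HB Require Import structures.
From mathcomp Require Import all_boot all_order all_algebra all_field.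
From Stdlib Require Import ClassicalEpsilon.

Set Implicit Arguments.
Unset Strict Implicit.
Unset Printing Implicit Defensive.

Import Order.TTheory GRing.Theory.

Lemma min_nat_le (Pr : pred nat) n : Pr n -> min_nat Pr <= n.
Proof.
move=> Prn; rewrite /min_nat; case: excluded_middle_informative => // ex.
by case: ex_minnP => m _ /(_ n Prn).
Qed.

Lemma min_nat_holds (Pr : pred nat) n : Pr n -> Pr (min_nat Pr).
Proof.
move=> Prn; rewrite /min_nat; case: excluded_middle_informative => [ex|].
  by case: ex_minnP.
by case; exists n.
Qed.

Section Hamming.

Variable F : finType.

Lemma hammingE n (x y : 'rV[F]_n) :
  hamming x y = \sum_(i < n) (x ord0 i != y ord0 i).
Proof.
rewrite /hamming -sum1_card big_mkcond /=.
by apply: eq_bigr => i _; rewrite inE; case: (_ != _).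
Qed.

Lemma hamming_row_mx m n (a c : 'rV[F]_m) (b d : 'rV[F]_n) :
  hamming (row_mx a b) (row_mx c d) = hamming a c + hamming b d.
Proof.
rewrite !hammingE big_split_ord /=.
by congr (_ + _); apply: eq_bigr => i _; rewrite ?row_mxEl ?row_mxEr.
Qed.

Lemma hamming_leq_dim n (x y : 'rV[F]_n) : hamming x y <= n.
Proof. by rewrite /hamming -[n in _ <= n]card_ord max_card. Qed.

Lemma hamming_mxvec m n (A B : 'M[F]_(m, n)) :
  hamming (mxvec A) (mxvec B) = #|[set ij | A ij.1 ij.2 != B ij.1 ij.2]|.
Proof.
have inj_index : injective (uncurry (@mxvec_index m n)).
  move=> [i j] [i' j'] /= /(congr1 (cast_ord (esym (mxvec_cast m n)))).
  by rewrite !cast_ordK => /enum_rank_inj.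
rewrite /hamming -(card_imset _ inj_index); apply: eq_card => ij.
case/mxvec_indexP: ij => i j.
rewrite -[mxvec_index i j]/(uncurry (@mxvec_index m n) (i, j)) mem_imset //.
by rewrite !inE /= (mxvecE A i j) (mxvecE B i j).
Qed.

Definition row_splice n (u v : 'rV[F]_n) (s : nat) : 'rV[F]_n :=
  \row_j (if j < s then v ord0 j else u ord0 j).

Lemma hamming_row_splice_step n (u v : 'rV[F]_n) s :
  hamming (row_splice u v s) (row_splice u v s.+1) <= 1.
Proof.
have diff_at_s (j : 'I_n) : (if j < s then v ord0 j else u ord0 j)
    != (if j < s.+1 then v ord0 j else u ord0 j) -> j = s :> nat.
  rewrite [j < s.+1]ltnS [j <= s]leq_eqVlt; case: (nat_of_ord j =P s) => //= _.
  by case: (_ < _); rewrite eqxx.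
apply/card_le1_eqP => i j; rewrite !inE !mxE => /diff_at_s Ei /diff_at_s Ej.
by apply: val_inj; rewrite /= Ei Ej.
Qed.

Lemma hamming_adjacent_const (T : Type) n (f : 'rV[F]_n -> T) :
  (forall u v, hamming u v <= 1 -> f u = f v) -> forall u v, f u = f v.
Proof.
move=> f_adj u v.
have f_splice s : f (row_splice u v s) = f u.
  elim: s => [|s IHs].
    by congr f; apply/rowP => j; rewrite mxE.
  by rewrite -IHs; apply/esym/f_adj/hamming_row_splice_step.
by rewrite -(f_splice n); congr f; apply/rowP => j; rewrite mxE ltn_ord.
Qed.

End Hamming.

Lemma bigminn_le (I : finType) (A : {pred I}) (f : I -> nat) k j :
  j \in A -> \big[minn/k]_(i in A) f i <= f j.
Proof.
move=> jA; rewrite -minEnat.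
exact: (@bigmin_le_cond _ nat _ k _ (mem A) f jA).
Qed.

Lemma set_dist_le (F : finType) k (A B : {set 'rV[F]_k}) u v :
  u \in A -> v \in B -> set_dist A B <= hamming u v.
Proof. by move=> uA vB; rewrite (leq_trans (bigminn_le _ _ uA)) ?bigminn_le. Qed.

(* Codeword i is the indicator of the i-th column of a d x M matrix, so two
   distinct codewords differ in (at least) the d entries of one column. *)
Lemma bounded_req_Dcode (F : finNzRingType) M (D : 'M[nat]_M) d :
  (forall i j, D i j <= d) -> is_Dcode_len F D (d * M).
Proof.
move=> D_le; apply/existsP.
exists [ffun i => mxvec (\matrix_(a < d, b < M) (b == i)%:R : 'M[F]_(d, M))%R].
apply/forallP => i; apply/forallP => j; apply/implyP => neq_ij.
apply: leq_trans (D_le i j) _; rewrite !ffunE hamming_mxvec.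
have inj_col : injective (fun a : 'I_d => (a, i)) by move=> a b [].
rewrite -[d in d <= _]card_ord -(card_imset _ inj_col) subset_leq_card //.
apply/subsetP => _ /imsetP [a _ ->]; rewrite inE !mxE /= eqxx (negbTE neq_ij).
exact: oner_neq0.
Qed.

Section Encodings.

Variables (F : finType) (k t : nat) (P : {set {set 'rV[F]_k}}).

Lemma DP_blocks_le i j : DP_blocks P t i j <= 2 * t + 1.
Proof. by rewrite mxE; case: (_ != _) => //; rewrite leq_subr. Qed.

Lemma encoding_Dcode_vecs r m (u : 'I_m -> 'rV[F]_k) :
  has_encoding P t r -> is_Dcode_len F (DP_vecs P t u) r.
Proof.
case/existsP => p /forallP p_sep; apply/existsP; exists [ffun i => p (u i)].
apply/forallP => i; apply/forallP => j; apply/implyP => _.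
rewrite mxE !ffunE; case: ifP => // neq_blocks.
have := implyP (forallP (p_sep (u i)) (u j)) neq_blocks.
by rewrite hamming_row_mx leq_subLR.
Qed.

Lemma Dcode_blocks_encoding r :
  partition P [set: 'rV[F]_k] -> is_Dcode_len F (DP_blocks P t) r ->
  has_encoding P t r.
Proof.
case/and3P => /eqP cover_P _ _ /existsP [z /forallP z_sep].
have blockP u : pblock P u \in P by rewrite pblock_mem // cover_P inE.
pose idx u := enum_rank_in (blockP u) (pblock P u).
have idxK u : enum_val (idx u) = pblock P u by rewrite enum_rankK_in.
apply/existsP; exists [ffun u => z (idx u)].
apply/forallP => u; apply/forallP => v; apply/implyP => neq_blocks.
have neq_idx : idx u != idx v.
  by apply: contra neq_blocks => /eqP Euv; rewrite -idxK Euv idxK.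
have := implyP (forallP (z_sep (idx u)) (idx v)) neq_idx.
rewrite mxE neq_idx !idxK leq_subLR => sep_z.
rewrite hamming_row_mx !ffunE (leq_trans sep_z) // leq_add2r.
by apply: set_dist_le; rewrite mem_pblock cover_P inE.
Qed.

Lemma encoding_redundancy_ge r :
  partition P [set: 'rV[F]_k] -> has_encoding P t r -> 2 <= #|P| -> 2 * t <= r.
Proof.
case/and3P => /eqP cover_P triv_P P_nz /existsP [p /forallP p_sep] P_ge2.
rewrite leqNgt; apply/negP => r_lt.
have adj_same_block u v : hamming u v <= 1 -> pblock P u = pblock P v.
  move=> uv_le1; apply/eqP; apply/negPn/negP => neq_blocks.
  have := implyP (forallP (p_sep u) v) neq_blocks; rewrite hamming_row_mx.
  move/leq_trans/(_ (leq_add uv_le1 (hamming_leq_dim (p u) (p v)))).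
  by rewrite addnC leq_add2l leqNgt r_lt.
have one_block := hamming_adjacent_const adj_same_block.
move: P_ge2; rewrite leqNgt; apply/negP; rewrite negbK.
apply/card_le1_eqP => B C BP CP.
have [u uB] : exists u, u \in B by apply/set0Pn; apply: contraNneq P_nz => <-.
have [v vC] : exists v, v \in C by apply/set0Pn; apply: contraNneq P_nz => <-.
by rewrite -(def_pblock triv_P BP uB) -(def_pblock triv_P CP vC) (one_block u v).
Qed.

End Encodings.

Theorem theorem2 (F : finFieldType) (k t : nat)
    (P : {set {set 'rV[F]_k}}) :
  0 < k -> 0 < t -> partition P [set: 'rV[F]_k] ->
  (forall (m : nat) (u : 'I_m -> 'rV[F]_k), injective u ->
      N_req F (DP_vecs P t u) <= r_opt P t)
  /\ r_opt P t <= N_req F (DP_blocks P t)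
  /\ (2 <= #|P| -> 2 * t <= r_opt P t).
Proof.
move=> _ _ partition_P.
have enc_N : has_encoding P t (N_req F (DP_blocks P t)).
  apply: Dcode_blocks_encoding partition_P _.
  exact: min_nat_holds (bounded_req_Dcode F (@DP_blocks_le F k t P)).
have enc_r : has_encoding P t (r_opt P t) := min_nat_holds enc_N.
split; [|split].
- by move=> m u _; apply/min_nat_le/encoding_Dcode_vecs.
- exact: min_nat_le enc_N.
- exact: encoding_redundancy_ge partition_P enc_r.
Qed.
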